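(* Let $\lambda>0$ and consider the Yule (pure-birth) tree with speciation rate $\lambda$ started from an initial bifurcation. For $n\ge 2$, let $P_n$ (respectively $I_n$) be the expected sum of the lengths of the pendant (respectively interior) edges of the tree at the moment just before the $(n+1)$-st leaf appears, i.e. the tree with $n$ leaves observed at the end of the period during which it has exactly $n$ leaves. Set $p_n=P_n/n$ and $i_n=I_n/(n-2)$. Then for all $n\ge 3$, $$i_n=p_n=\frac{1}{2\lambda}.$$ (In particular $P_n=\frac{n}{2\lambda}$ for all $n\ge 2$.) *)

From HB Require Import structures.
From mathcomp Require Import all_boot all_order all_algebra.
From mathcomp Require Import all_classical all_reals all_analysis.
Set Implicit Arguments. Unset Strict Implicit. Unset Printing Implicit Defensive.
Import Order.TTheory GRing.Theory Num.Theory.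
Local Open Scope ring_scope.
Local Open Scope classical_set_scope.
Local Open Scope ereal_scope.

(* State of a Yule tree under construction:
   - ytime     : current time (the initial bifurcation is at time 0),
   - ybirths   : for each current leaf (index 0..k-1), the birth time of
                 its pendant edge (time of the split that created it),
   - yinterior : total length of the edges that are already interior
                 (edges whose lower end has already split). *)
Record ystate (R : realType) := YState {
  ytime : R; ybirths : seq R; yinterior : R }.

Definition yinit (R : realType) : ystate R := YState 0%R [:: 0%R; 0%R] 0%R.

Definition yadvance (R : realType) (s : ystate R) (t : R) : ystate R :=
  YState (ytime s + t)%R (ybirths s) (yinterior s).

(* Leaf i splits at the current time: its pendant edge becomes interior
   and two new pendant edges are born (stored at index i and at the end). *)
Definition ysplit (R : realType) (s : ystate R) (i : nat) : ystate R :=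
  YState (ytime s)
         (rcons (set_nth 0%R (ybirths s) i (ytime s)) (ytime s))
         (yinterior s + (ytime s - nth 0%R (ybirths s) i))%R.

Definition ypendant (R : realType) (s : ystate R) : R :=
  (\sum_(b <- ybirths s) (ytime s - b))%R.

(* Expectation of F(final state) for the Yule process with rate lam
   started in state s with k leaves, observed after m more splits, at the
   end of the period with k+m leaves.  During a period with k leaves the
   holding time is Exp(k*lam), after which a uniformly chosen leaf splits
   (all choices and holding times independent): this is the Markov
   description of the Yule pure-birth tree. *)
Fixpoint yule_expect (R : realType) (lam : R) (F : ystate R -> \bar R)
    (m k : nat) (s : ystate R) {struct m} : \bar R :=
  \int[lebesgue_measure]_(t in `[0%R, +oo[%classic)
     ((k%:R * lam * expR (- (k%:R * lam * t)))%:E *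
      match m with
      | 0 => F (yadvance s t)
      | m'.+1 => (k%:R^-1)%:E *
          \sum_(i < k) yule_expect lam F m' k.+1 (ysplit (yadvance s t) i)
      end).

Definition Pn (R : realType) (lam : R) (n : nat) : \bar R :=
  yule_expect lam (fun s => (ypendant s)%:E) (n - 2) 2 (yinit R).
Definition In (R : realType) (lam : R) (n : nat) : \bar R :=
  yule_expect lam (fun s => (yinterior s)%:E) (n - 2) 2 (yinit R).

From HB Require Import structures.
From mathcomp Require Import all_boot all_order all_algebra.
From mathcomp Require Import all_classical all_reals all_analysis.
From mathcomp Require Import ring lra measurable_realfun.
Set Implicit Arguments.
Unset Strict Implicit.
Unset Printing Implicit Defensive.
Import Order.TTheory GRing.Theory Num.Theory.
Import numFieldTopology.Exports numFieldNormedType.Exports.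
Local Open Scope classical_set_scope.
Local Open Scope ring_scope.

(* While the tree has k leaves, the waiting time is Exp(k lam), during which
   the pendant length P grows at rate k, so it grows by 1/lam on average; the
   split of a uniform leaf then turns on average P/k of pendant length into
   interior length.  Hence the expectation of a P + b I at the end of the
   process is an affine function of the current (P, I), with coefficients
   depending only on the number k of leaves and the number m of remaining
   splits, computed by induction on m.  Starting from P = I = 0 and k = 2 this
   gives P_n = n/(2 lam) and I_n = (n-2)/(2 lam). *)

Lemma is_derive_continuous (R : realType) (g dg : R -> R) :
  (forall x : R, is_derive x 1 g (dg x)) -> continuous g.
Proof.
move=> gdg x; have [dgx _] := gdg x.
exact/differentiable_continuous/derivable1_diffP.
Qed.

Lemma continuous_ge0_integrable (R : realType) (D : set R) (g : R -> R) :
  measurable D -> continuous g -> (forall t, D t -> 0 <= g t) ->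
  (\int[lebesgue_measure]_(t in D) (g t)%:E < +oo)%E ->
  lebesgue_measure.-integrable D (fun t => (g t)%:E).
Proof.
move=> mD cg g_ge0 g_fin; apply/integrableP; split.
  apply/measurable_EFinP; apply: measurable_funTS.
  exact: continuous_measurable_fun.
suff -> : (\int[lebesgue_measure]_(t in D) `|(g t)%:E| =
           \int[lebesgue_measure]_(t in D) (g t)%:E)%E by [].
by apply: eq_integral => t /[!inE] Dt; rewrite /= ger0_norm ?g_ge0.
Qed.

Section exponential_moments.
Variables (R : realType) (r : R).
Hypothesis r_gt0 : 0 < r.

Lemma is_derive_expRNM (x : R) :
  is_derive x 1 (fun t => expR (- (r * t))) (- r * expR (- (r * x))).
Proof.
have dlin : is_derive x 1 ((- r) \*: (@id R)) (- r * 1) by exact: is_deriveZ.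
have := is_derive1_comp (is_derive_expR _) dlin.
have -> : expR \o (- r) \*: (@id R) = (fun t => expR (- (r * t))).
  by apply/funext => t /=; rewrite -mulNr.
by move=> dexp; apply: is_derive_eq dexp _; rewrite /= mulr1 mulrC -mulNr.
Qed.

Lemma is_derive_NexpRNM (x : R) :
  is_derive x 1 (fun t => - expR (- (r * t))) (r * expR (- (r * x))).
Proof.
have := is_deriveN (is_derive_expRNM x).
have -> : - (fun t => expR (- (r * t))) = (fun t => - expR (- (r * t))).
  by apply/funext.
by move=> d; apply: is_derive_eq d _; rewrite mulNr opprK.
Qed.

Lemma is_derive_expRNM_mean_primitive (x : R) :
  is_derive x 1 (fun t => - (t + r^-1) * expR (- (r * t)))
    (r * expR (- (r * x)) * x).
Proof.
have dlin : is_derive x 1 (- (@id R + cst r^-1)) (- (1 + 0)).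
  by apply: is_deriveN; apply: is_deriveD.
have := is_deriveM dlin (is_derive_expRNM x).
have -> : (- (@id R + cst r^-1)) * (fun t => expR (- (r * t))) =
          (fun t => - (t + r^-1) * expR (- (r * t))) by apply/funext.
move=> d; apply: is_derive_eq d _.
rewrite (_ : (- (id + cst r^-1)) x = - (x + r^-1)) // addr0 /GRing.scale /=.
by field; exact: lt0r_neq0.
Qed.

Lemma continuous_expRNM : continuous (fun t => expR (- (r * t))).
Proof. exact: is_derive_continuous is_derive_expRNM. Qed.

Lemma continuous_expRNM_density : continuous (fun t => r * expR (- (r * t))).
Proof. by move=> t; apply: cvgM; [exact: cvg_cst | exact: continuous_expRNM]. Qed.

Lemma continuous_expRNM_mean : continuous (fun t => r * expR (- (r * t)) * t).
Proof. by move=> t; apply: cvgM; [exact: continuous_expRNM_density | exact: cvg_id]. Qed.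

Lemma cvg_expRNM : expR (- (r * t)) @[t --> +oo] --> 0.
Proof.
apply: (@cvg_comp _ _ _ (fun t => r * t) (fun z => expR (- z)) _ (pinfty_nbhs R)).
  exact: gt0_cvgMry.
exact: cvgr_expR.
Qed.

Lemma cvg_mul_expRNM : t * expR (- (r * t)) @[t --> +oo] --> 0.
Proof.
(* [expR (r t) >= (r t)^2 / 2] gives [t expR (- (r t)) <= 2 / (r^2 t)]. *)
apply/cvgrPdist_le => e e0; near=> t.
have t_ge : 2 / (r ^+ 2 * e) <= t by near: t; apply: nbhs_pinfty_ge; exact: num_real.
have t_gt0 : 0 < t by apply: lt_le_trans t_ge; rewrite divr_gt0 ?mulr_gt0 ?exprn_gt0.
have rt_ge0 : 0 <= r * t by rewrite mulr_ge0 // ltW.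
have expR_ge := expR_ge1Dxn 1 rt_ge0.
rewrite sub0r normrN ger0_norm ?mulr_ge0 ?expR_ge0 ?(ltW t_gt0) //.
rewrite expRN ler_pdivrMr ?expR_gt0 //.
apply: le_trans (ler_wpM2l (ltW e0) expR_ge).
move: t_ge; rewrite ler_pdivrMr ?mulr_gt0 ?exprn_gt0 // => t_ge.
have -> : (2`!)%:R = 2 :> R by [].
nra.
Unshelve. all: end_near. Qed.

Lemma integral_expRNM :
  (\int[lebesgue_measure]_(t in `[0%R, +oo[%classic) (r * expR (- (r * t)))%:E = 1)%E.
Proof.
rewrite (@ge0_continuous_FTC2y R _ (fun t => - expR (- (r * t))) 0 0).
- by rewrite mulr0 oppr0 expR0 -EFinB sub0r opprK.
- by move=> t _; rewrite mulr_ge0 ?expR_ge0 // ltW.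
- exact/continuous_subspaceT/continuous_expRNM_density.
- by rewrite -oppr0; apply: cvgN; exact: cvg_expRNM.
- by move=> x _; have [] := is_derive_NexpRNM x.
- apply: cvg_at_right_filter; apply: (is_derive_continuous is_derive_NexpRNM).
- by move=> x _; rewrite derive1E (is_derive_NexpRNM x).(derive_val).
Qed.

Lemma integral_mul_expRNM :
  (\int[lebesgue_measure]_(t in `[0%R, +oo[%classic)
     (r * expR (- (r * t)) * t)%:E = (r^-1)%:E)%E.
Proof.
rewrite (@ge0_continuous_FTC2y R _ (fun t => - (t + r^-1) * expR (- (r * t))) 0 0).
- by rewrite mulr0 oppr0 expR0 mulr1 !add0r EFinN oppeK.
- by move=> t t_ge0; rewrite !mulr_ge0 ?expR_ge0 // ltW.
- exact/continuous_subspaceT/continuous_expRNM_mean.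
- rewrite (_ : 0 = - (0 + r^-1 * 0)); last by rewrite mulr0 addr0 oppr0.
  under eq_fun do rewrite mulNr mulrDl.
  by apply: cvgN; apply: cvgD; [exact: cvg_mul_expRNM | apply: cvgMr; exact: cvg_expRNM].
- by move=> x _; have [] := is_derive_expRNM_mean_primitive x.
- apply: cvg_at_right_filter; apply: (is_derive_continuous is_derive_expRNM_mean_primitive).
- by move=> x _; rewrite derive1E (is_derive_expRNM_mean_primitive x).(derive_val).
Qed.

Lemma integral_expRNM_affine (A B : R) :
  (\int[lebesgue_measure]_(t in `[0%R, +oo[%classic)
     ((r * expR (- (r * t)))%:E * (A + B * t)%:E) = (A + B / r)%:E)%E.
Proof.
have int_dens : lebesgue_measure.-integrable `[0%R, +oo[%classic
    (fun t => (r * expR (- (r * t)))%:E).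
  apply: continuous_ge0_integrable => //.
  - exact: continuous_expRNM_density.
  - by move=> t _; rewrite mulr_ge0 ?expR_ge0 // ltW.
  - by rewrite integral_expRNM ltry.
have int_mean : lebesgue_measure.-integrable `[0%R, +oo[%classic
    (fun t => (r * expR (- (r * t)) * t)%:E).
  apply: continuous_ge0_integrable => //.
  - exact: continuous_expRNM_mean.
  - by move=> t; rewrite /= in_itv /= andbT => t_ge0; rewrite !mulr_ge0 ?expR_ge0 // ltW.
  - by rewrite integral_mul_expRNM ltry.
transitivity (\int[lebesgue_measure]_(t in `[0%R, +oo[%classic)
  (A%:E * (r * expR (- (r * t)))%:E + B%:E * (r * expR (- (r * t)) * t)%:E))%E.
  by apply: eq_integral => t _; rewrite -!EFinM -EFinD; congr EFin; ring.
rewrite integralD //; last 2 first.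
- exact: integrableZl.
- exact: integrableZl.
by rewrite !integralZl // integral_expRNM integral_mul_expRNM -!EFinM mulr1.
Qed.

End exponential_moments.

Lemma sumr_set_nth (T : Type) (V : zmodType) (f : T -> V) (x0 y : T) (l : seq T) i :
  (i < size l)%N ->
  \sum_(x <- set_nth x0 l i y) f x = \sum_(x <- l) f x - f (nth x0 l i) + f y.
Proof.
elim: l i => [|x l IHl] [|i] //= i_lt; rewrite !big_cons.
  by rewrite [f x + _]addrC addrK addrC.
by rewrite IHl // !addrA.
Qed.

Section yule_tree_moves.
Variable R : realType.
Implicit Types (s : ystate R) (t : R).

Lemma ypendant_advance s t :
  ypendant (yadvance s t) = ypendant s + (size (ybirths s))%:R * t.
Proof.
rewrite /ypendant /=; elim: (ybirths s) => [|b l IHl]; first by rewrite !big_nil mul0r addr0.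
by rewrite !big_cons IHl /= -addn1 natrD; ring.
Qed.

Lemma size_ysplit s i : (i < size (ybirths s))%N ->
  size (ybirths (ysplit s i)) = (size (ybirths s)).+1.
Proof. by move=> i_lt; rewrite size_rcons size_set_nth (maxn_idPr i_lt). Qed.

Lemma ypendant_ysplit s i : (i < size (ybirths s))%N ->
  ypendant (ysplit s i) = ypendant s - (ytime s - nth 0 (ybirths s) i).
Proof.
move=> i_lt; rewrite /ypendant /= -cats1 big_cat big_seq1 /= subrr addr0.
by rewrite (sumr_set_nth (fun b => ytime s - b)) // subrr addr0.
Qed.

Lemma sum_pendant_lengths s k : size (ybirths s) = k ->
  \sum_(i < k) (ytime s - nth 0 (ybirths s) i) = ypendant s.
Proof. by move=> <-; rewrite /ypendant (big_nth 0) big_mkord. Qed.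

Lemma sum_ypendant_ysplit s k : size (ybirths s) = k ->
  \sum_(i < k) ypendant (ysplit s i) = (k%:R - 1) * ypendant s.
Proof.
move=> size_s; rewrite (eq_bigr (fun i : 'I_k =>
  ypendant s - (ytime s - nth 0 (ybirths s) i))); last first.
  by move=> i _; rewrite ypendant_ysplit // size_s.
by rewrite sumrB sum_pendant_lengths // sumr_const card_ord -mulr_natl; ring.
Qed.

Lemma sum_yinterior_ysplit s k : size (ybirths s) = k ->
  \sum_(i < k) yinterior (ysplit s i) = k%:R * yinterior s + ypendant s.
Proof.
by move=> size_s; rewrite big_split /= sum_pendant_lengths // sumr_const card_ord mulr_natl.
Qed.

End yule_tree_moves.

Section yule_expectation.
Variables (R : realType) (lam : R).
Hypothesis lam_gt0 : 0 < lam.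
Implicit Types (s : ystate R) (c d e : R).

Lemma yule_period k s c d e : (0 < k)%N -> size (ybirths s) = k ->
  (\int[lebesgue_measure]_(t in `[0%R, +oo[%classic)
     ((k%:R * lam * expR (- (k%:R * lam * t)))%:E *
      (c * ypendant (yadvance s t) + d * yinterior (yadvance s t) + e)%:E))%E =
  (c * ypendant s + d * yinterior s + e + c / lam)%:E.
Proof.
move=> k_gt0 size_s; have klam_gt0 : 0 < k%:R * lam by rewrite mulr_gt0 ?ltr0n.
transitivity (\int[lebesgue_measure]_(t in `[0%R, +oo[%classic)
  ((k%:R * lam * expR (- (k%:R * lam * t)))%:E *
   (c * ypendant s + d * yinterior s + e + (c * k%:R) * t)%:E))%E.
  by apply: eq_integral => t _; rewrite ypendant_advance size_s /=; congr (_ * _%:E)%E; ring.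
rewrite integral_expRNM_affine //; congr EFin; field.
by rewrite gt_eqF // pnatr_eq0 -lt0n.
Qed.

Lemma mean_ysplit k s c d e : (0 < k)%N -> size (ybirths s) = k ->
  k%:R^-1 * \sum_(i < k) (c * ypendant (ysplit s i) + d * yinterior (ysplit s i) + e) =
  (c * (k%:R - 1) + d) / k%:R * ypendant s + d * yinterior s + e.
Proof.
move=> k_gt0 size_s.
rewrite !big_split /= -!mulr_sumr sum_ypendant_ysplit // sum_yinterior_ysplit //.
rewrite sumr_const card_ord -mulr_natl; field.
by rewrite pnatr_eq0 -lt0n.
Qed.

Variables a b : R.

(* The solution of the recursion read off from [yule_period] and [mean_ysplit]:
   [c k 0 = a], [C k 0 = a / lam],
   [c k m.+1 = (c k.+1 m * (k - 1) + b) / k], [C k m.+1 = C k.+1 m + c k m.+1 / lam]. *)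
Definition ycoef_pendant (k m : nat) : R :=
  (a * (k%:R - 1) + b * m%:R) / (k%:R + m%:R - 1).

Definition ycoef_const (k m : nat) : R :=
  a / lam * (1 + ((k%:R + m%:R - 2) * (k%:R + m%:R - 1) - (k%:R - 2) * (k%:R - 1))
                    / (2 * (k%:R + m%:R - 1)))
  + b / lam * (m%:R * (m%:R + 1) / (2 * (k%:R + m%:R - 1))).

Lemma yule_expect_affine m k s : (2 <= k)%N -> size (ybirths s) = k ->
  yule_expect lam (fun s => (a * ypendant s + b * yinterior s)%:E) m k s =
  (ycoef_pendant k m * ypendant s + b * yinterior s + ycoef_const k m)%:E.
Proof.
elim: m k s => [|m IHm] k s k_ge2 size_s; have k_gt0 := ltnW k_ge2;
  have kR_ge2 : (2 <= k%:R :> R) by rewrite (ler_nat R 2 k).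
- transitivity (\int[lebesgue_measure]_(t in `[0%R, +oo[%classic)
    ((k%:R * lam * expR (- (k%:R * lam * t)))%:E *
     (a * ypendant (yadvance s t) + b * yinterior (yadvance s t) + 0)%:E))%E.
    by apply: eq_integral => t _; rewrite addr0.
  rewrite yule_period //; congr EFin; rewrite /ycoef_pendant /ycoef_const.
  by field; rewrite ?mulf_neq0 ?gt_eqF //; lra.
- transitivity (\int[lebesgue_measure]_(t in `[0%R, +oo[%classic)
    ((k%:R * lam * expR (- (k%:R * lam * t)))%:E *
     ((ycoef_pendant k.+1 m * (k%:R - 1) + b) / k%:R * ypendant (yadvance s t)
      + b * yinterior (yadvance s t) + ycoef_const k.+1 m)%:E))%E.
    apply: eq_integral => t _; congr (_ * _)%E.
    rewrite -mean_ysplit //= EFinM -sumEFin; congr (_ * _)%E; apply: eq_bigr => i _.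
    by apply: IHm; rewrite ?size_ysplit //= size_s.
  rewrite yule_period //; congr EFin.
  rewrite /ycoef_pendant /ycoef_const -[k.+1]addn1 -[m.+1]addn1 !natrD.
  have mR_ge0 : 0 <= m%:R :> R := ler0n _ _.
  by field; rewrite ?mulf_neq0 ?gt_eqF //; lra.
Qed.

End yule_expectation.

Section yule_edge_lengths.
Variables (R : realType) (lam : R).
Hypothesis lam_gt0 : 0 < lam.

Lemma ypendant_init : ypendant (yinit R) = 0.
Proof. by rewrite /ypendant /= !big_cons big_nil !subrr !addr0. Qed.

Lemma PnE n : (2 <= n)%N -> Pn lam n = (n%:R / (2 * lam))%:E.
Proof.
move=> n_ge2; have nR_ge2 : (2 <= n%:R :> R) by rewrite (ler_nat R 2 n).
rewrite /Pn (_ : (fun s => _) = fun s => (1 * ypendant s + 0 * yinterior s)%:E).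
  rewrite yule_expect_affine // ypendant_init; congr EFin.
  rewrite /ycoef_pendant /ycoef_const natrB //.
  by field; rewrite ?mulf_neq0 ?gt_eqF //; lra.
by apply/funext => s; rewrite mul1r mul0r addr0.
Qed.

Lemma InE n : (2 <= n)%N -> In lam n = ((n%:R - 2) / (2 * lam))%:E.
Proof.
move=> n_ge2; have nR_ge2 : (2 <= n%:R :> R) by rewrite (ler_nat R 2 n).
rewrite /In (_ : (fun s => _) = fun s => (0 * ypendant s + 1 * yinterior s)%:E).
  rewrite yule_expect_affine // ypendant_init; congr EFin.
  rewrite /ycoef_pendant /ycoef_const natrB //.
  by rewrite [yinterior _]/=; field; rewrite ?mulf_neq0 ?gt_eqF //; lra.
by apply/funext => s; rewrite mul1r mul0r add0r.
Qed.

End yule_edge_lengths.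

Local Open Scope ereal_scope.

Theorem theorem1 (R : realType) (lam : R) (hlam : (0 < lam)%R) :
  (forall n : nat, (2 <= n)%N -> Pn lam n = (n%:R / (2 * lam))%:E) /\
  (forall n : nat, (3 <= n)%N ->
     In lam n * ((n - 2)%:R^-1)%:E = (1 / (2 * lam))%:E /\
     Pn lam n * (n%:R^-1)%:E = (1 / (2 * lam))%:E).
Proof.
split=> [|n n_ge3]; first exact: PnE.
have n_ge2 := ltnW n_ge3.
have nR_ge3 : (3 <= n%:R :> R)%R by rewrite (ler_nat R 3 n).
rewrite InE // PnE // natrB // -!EFinM.
by split; congr EFin; field; rewrite ?mulf_neq0 ?gt_eqF //; lra.
Qed.
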